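(* For every Tychonoff space $X$, the following are equivalent: (1) $C_p(X)\models S_1(\Gamma_f,\Omega_f)$ for every $f\in C_p(X)$; (2) $X\models S_1(\Gamma_F,\Omega)$.
   Context: All spaces are Tychonoff; $C_p(X)$ is $C(X)$ with pointwise convergence topology. For $y$ in a space $Y$: $\Omega_y=\{A\subseteq Y: y\in\overline A\setminus A\}$, $\Gamma_y=\{A\subseteq Y: A$ infinite, $y\notin A$, every neighbourhood of $y$ contains all but finitely many points of $A\}$. A zero-set is $g^{-1}(0)$ for some $g\in C(X)$; a cozero-set is the complement of a zero-set. A cover $\mathcal U$ of $X$ always means $X=\bigcup\mathcal U$, $X\notin\mathcal U$. $\Omega$: open $\omega$-covers (every finite subset of $X$ lies in some member). A $\gamma$-cover is an infinite cover such that each point lies in all but finitely many members. $\Gamma_F$ is the family of $\gamma$-covers $\mathcal U$ of $X$ by cozero-sets that are $\gamma_F$-shrinkable: there exist zero-sets $F(U)\subseteq U$ ($U\in\mathcal U$) such that $\{F(U):U\in\mathcal U\}$ is a $\gamma$-cover of $X$. $S_1(\mathcal A,\mathcal B)$: for every sequence $(A_n)$ from $\mathcal A$ there are $b_n\in A_n$ with $\{b_n:n\in\omega\}\in\mathcal B$. *)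

From Stdlib Require Export Reals List.
Open Scope R_scope.

Definition is_topology {X : Type} (T : (X -> Prop) -> Prop) : Prop :=
  T (fun _ => True) /\
  (forall U V, T U -> T V -> T (fun x => U x /\ V x)) /\
  (forall F : (X -> Prop) -> Prop, (forall U, F U -> T U) ->
     T (fun x => exists U, F U /\ U x)).

Definition nbhd {Y : Type} (T : (Y -> Prop) -> Prop) (y : Y) (N : Y -> Prop) : Prop :=
  exists U, T U /\ U y /\ (forall z, U z -> N z).

Definition in_closure {Y : Type} (T : (Y -> Prop) -> Prop) (A : Y -> Prop) (y : Y) : Prop :=
  forall N, nbhd T y N -> exists a, A a /\ N a.

Definition R_open (V : R -> Prop) : Prop :=
  forall y, V y -> exists eps, eps > 0 /\ forall z, Rabs (z - y) < eps -> V z.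

Definition continuous {X : Type} (T : (X -> Prop) -> Prop) (f : X -> R) : Prop :=
  forall V, R_open V -> T (fun x => V (f x)).

Definition tychonoff {X : Type} (T : (X -> Prop) -> Prop) : Prop :=
  (forall x y : X, x <> y -> exists U, T U /\ U x /\ ~ U y) /\
  (forall (C : X -> Prop) (x : X), T (fun z => ~ C z) -> ~ C x ->
     exists f, continuous T f /\ (forall z, 0 <= f z <= 1) /\ f x = 0 /\
               (forall z, C z -> f z = 1)).

Definition CX {X : Type} (T : (X -> Prop) -> Prop) : Type :=
  { f : X -> R | continuous T f }.

Definition Cp_open {X : Type} (T : (X -> Prop) -> Prop) (W : CX T -> Prop) : Prop :=
  forall g, W g -> exists (F : list X) (eps : R), eps > 0 /\
    forall h : CX T, (forall x, In x F -> Rabs (proj1_sig h x - proj1_sig g x) < eps) -> W h.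

Definition infinite {Y : Type} (A : Y -> Prop) : Prop :=
  ~ exists L : list Y, forall a, A a -> In a L.

Definition Omega_at {Y : Type} (T : (Y -> Prop) -> Prop) (y : Y) (A : Y -> Prop) : Prop :=
  in_closure T A y /\ ~ A y.

Definition Gamma_at {Y : Type} (T : (Y -> Prop) -> Prop) (y : Y) (A : Y -> Prop) : Prop :=
  infinite A /\ ~ A y /\
  forall N, nbhd T y N -> exists L : list Y, forall a, A a -> ~ N a -> In a L.

Definition zero_set {X : Type} (T : (X -> Prop) -> Prop) (Z : X -> Prop) : Prop :=
  exists g, continuous T g /\ forall x, Z x <-> g x = 0.
Definition cozero_set {X : Type} (T : (X -> Prop) -> Prop) (U : X -> Prop) : Prop :=
  exists g, continuous T g /\ forall x, U x <-> g x <> 0.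

Definition is_cover {X : Type} (U : (X -> Prop) -> Prop) : Prop :=
  (forall x, exists V, U V /\ V x) /\ ~ (exists V, U V /\ forall x, V x).

Definition omega_cover {X : Type} (T : (X -> Prop) -> Prop) (U : (X -> Prop) -> Prop) : Prop :=
  is_cover U /\ (forall V, U V -> T V) /\
  (forall F : list X, exists V, U V /\ forall x, In x F -> V x).

Definition gamma_cover {X : Type} (U : (X -> Prop) -> Prop) : Prop :=
  is_cover U /\ infinite U /\
  (forall x, exists L : list (X -> Prop), forall V, U V -> ~ V x -> In V L).

Definition GammaF {X : Type} (T : (X -> Prop) -> Prop) (U : (X -> Prop) -> Prop) : Prop :=
  gamma_cover U /\ (forall V, U V -> cozero_set T V) /\
  exists F : (X -> Prop) -> (X -> Prop),
    (forall V, U V -> zero_set T (F V) /\ forall x, F V x -> V x) /\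
    gamma_cover (fun W => exists V, U V /\ W = F V).

Definition S1 {E : Type} (A B : (E -> Prop) -> Prop) : Prop :=
  forall An : nat -> (E -> Prop), (forall n, A (An n)) ->
    exists b : nat -> E, (forall n, An n (b n)) /\ B (fun e => exists n, e = b n).

From Stdlib Require Import Reals Lra Lia List Classical ClassicalEpsilon FunctionalExtensionality PropExtensionality.
Open Scope R_scope.

(* (1) => (2): for a Γ_F-cover U with zero-set shrinking F, the functions h_U that vanish on
   F(U) and equal 1 off U (the ratio |z| / (|z| + |g|) of the defining functions) converge to 0
   in C_p(X), because the F(U) form a γ-cover; a selection accumulating at 0 picks sets U
   forming an ω-cover.
   (2) => (1): for A in Γ_f, the sets {x : |g x - f x| < 1/(n+1)}, g in A, form a Γ_F-cover
   (shrunk to the closed balls of half the radius) unless some g in A is uniformly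
   1/(n+1)-close to f.  If that happens for infinitely many n these g already accumulate at f;
   otherwise an ω-cover selected from the covers yields functions accumulating at f. *)

Lemma set_ext {A : Type} (P Q : A -> Prop) : (forall x, P x <-> Q x) -> P = Q.
Proof.
  intro H; apply functional_extensionality; intro x; apply propositional_extensionality; apply H.
Qed.

Lemma list_of_finite_union {Y W : Type} (K : list Y) (P : Y -> W -> Prop) :
  (forall y, In y K -> exists Ly, forall w, P y w -> In w Ly) ->
  exists M, forall w y, In y K -> P y w -> In w M.
Proof.
  induction K as [|y K IH]; intro H.
  - exists nil. intros w y [].
  - destruct (H y (or_introl eq_refl)) as [Ly HLy].
    destruct IH as [M HM]; [intros y' Hy'; apply H; right; exact Hy'|].
    exists (Ly ++ M). intros w y' [<-|Hy'] HP; apply in_or_app; eauto.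
Qed.

Lemma infinite_avoid {Y : Type} (A : Y -> Prop) (L : list Y) :
  infinite A -> exists a, A a /\ ~ In a L.
Proof.
  intro H. apply NNPP; intro Hno. apply H. exists L. intros a Ha.
  apply NNPP; intro Hn. apply Hno. exists a; auto.
Qed.

Lemma infinite_fiber {Y Z : Type} (A : Y -> Prop) (phi : Y -> Z) (L : list Z) :
  infinite A -> (forall y, A y -> In (phi y) L) ->
  exists z, In z L /\ infinite (fun y => A y /\ phi y = z).
Proof.
  intros HA HL. apply NNPP; intro Hno.
  destruct (list_of_finite_union L (fun z y => A y /\ phi y = z)) as [M HM].
  { intros z Hz. apply NNPP; intro Hfin. apply Hno. exists z. split; [exact Hz|].
    intros [Lz HLz]. apply Hfin. exists Lz. exact HLz. }
  apply HA. exists M. intros y Hy. apply (HM y (phi y)); auto.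
Qed.

Lemma list_uniform_gap {Y : Type} (K : list Y) (u : Y -> R) (r : R) :
  (forall y, In y K -> u y < r) -> exists e, 0 < e /\ forall y, In y K -> u y + e <= r.
Proof.
  induction K as [|a K IH]; intro H.
  - exists 1. split; [lra | intros y []].
  - destruct IH as [e [He He']]; [intros y Hy; apply H; right; exact Hy|].
    assert (Ha : u a < r) by (apply H; left; reflexivity).
    exists (Rmin e (r - u a)). split; [apply Rmin_pos; lra|].
    intros y [<-|Hy].
    + pose proof (Rmin_r e (r - u a)). lra.
    + pose proof (Rmin_l e (r - u a)). specialize (He' y Hy). lra.
Qed.

Lemma cover_member_not_full {X : Type} (U : (X -> Prop) -> Prop) (V : X -> Prop) :
  is_cover U -> U V -> exists x, ~ V x.
Proof.
  intros [_ HnotX] HV. apply NNPP; intro Hno. apply HnotX. exists V. split; [exact HV|].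
  intro x. apply NNPP; intro Hx. apply Hno. exists x; exact Hx.
Qed.

Lemma omega_cover_avoid {X : Type} (T : (X -> Prop) -> Prop) (U : (X -> Prop) -> Prop) :
  omega_cover T U -> forall (K : list X) (L : list (X -> Prop)),
  exists V, U V /\ ~ In V L /\ forall x, In x K -> V x.
Proof.
  intros [Hcover [_ Homega]] K L.
  pose proof (fun W => cover_member_not_full U W Hcover) as Hmiss.
  (* a witness point for every member of U in L, added to K, keeps those members out *)
  assert (HK : exists K', (forall x, In x K -> In x K') /\
             forall W, In W L -> U W -> exists x, In x K' /\ ~ W x).
  { induction L as [|W L IH].
    - exists K. split; [auto | intros W []].
    - destruct IH as [K' [HKK' HK']]. destruct (classic (U W)) as [HW|HW].
      + destruct (Hmiss W HW) as [x0 Hx0]. exists (x0 :: K'). split; [intros; right; auto|].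
        intros W' [<-|HW'] HUW'; [exists x0; split; [left|]; auto|].
        destruct (HK' W' HW' HUW') as [x [Hx Hx']]. exists x; split; [right|]; auto.
      + exists K'. split; [exact HKK'|]. intros W' [<-|HW'] HUW'; [contradiction | auto]. }
  destruct HK as [K' [HKK' HK']]. destruct (Homega K') as [V [HV HVK']].
  exists V. split; [exact HV|]. split.
  - intro HVL. destruct (HK' V HVL HV) as [x [Hx Hx']]. exact (Hx' (HVK' x Hx)).
  - intros x Hx. apply HVK', HKK', Hx.
Qed.

Lemma omega_cover_of_selection {X : Type} (T : (X -> Prop) -> Prop)
    (Un : nat -> (X -> Prop) -> Prop) (V : nat -> X -> Prop) :
  (forall n, is_cover (Un n) /\ Un n (V n) /\ T (V n)) ->
  (forall K : list X, exists n, forall x, In x K -> V n x) ->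
  omega_cover T (fun W => exists n, W = V n).
Proof.
  intros HV Hfinite. split; [split|split].
  - intro x. destruct (Hfinite (x :: nil)) as [n Hn]. exists (V n).
    split; [exists n; reflexivity | apply Hn; left; reflexivity].
  - intros [W [[n ->] Hfull]]. destruct (HV n) as [Hcover [HVn _]].
    destruct (cover_member_not_full _ _ Hcover HVn) as [x Hx]. exact (Hx (Hfull x)).
  - intros W [n ->]. apply HV.
  - intro K. destruct (Hfinite K) as [n Hn]. exists (V n). split; [exists n|]; auto.
Qed.

Definition radius (n : nat) : R := / (INR n + 1).

Lemma radius_pos n : 0 < radius n.
Proof. unfold radius. apply Rinv_0_lt_compat. pose proof (pos_INR n); lra. Qed.

Lemma radius_le m n : (m <= n)%nat -> radius n <= radius m.
Proof.
  intro H. unfold radius. apply Rinv_le_contravar; [pose proof (pos_INR m); lra|].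
  apply le_INR in H; lra.
Qed.

Lemma radius_lt eps : 0 < eps -> exists n, radius n < eps.
Proof.
  intro He. destruct (archimed_cor1 eps He) as [n [Hn Hn0]]. exists n. unfold radius.
  apply lt_0_INR in Hn0. eapply Rlt_trans; [|exact Hn].
  apply Rinv_lt_contravar; [apply Rmult_lt_0_compat|]; lra.
Qed.

Lemma Rmax0_neq0 s : Rmax 0 s <> 0 <-> 0 < s.
Proof. unfold Rmax; destruct (Rle_dec 0 s); split; intro; lra. Qed.

Lemma Rmax0_eq0 s : Rmax 0 s = 0 <-> s <= 0.
Proof. unfold Rmax; destruct (Rle_dec 0 s); split; intro; lra. Qed.

Lemma Rmax0_lipschitz s t : Rabs (Rmax 0 s - Rmax 0 t) <= Rabs (s - t).
Proof. unfold Rmax; destruct (Rle_dec 0 s), (Rle_dec 0 t); unfold Rabs; repeat destruct Rcase_abs; lra. Qed.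

Lemma Rabs_dist_lipschitz a b a0 b0 :
  Rabs (Rabs (a - b) - Rabs (a0 - b0)) <= Rabs (a - a0) + Rabs (b - b0).
Proof.
  eapply Rle_trans; [apply Rabs_triang_inv2|].
  replace (a - b - (a0 - b0)) with ((a - a0) + - (b - b0)) by ring.
  eapply Rle_trans; [apply Rabs_triang|]. rewrite Rabs_Ropp. lra.
Qed.

Lemma Rabs_ratio_lipschitz a b a0 b0 :
  0 < Rabs a + Rabs b -> 0 < Rabs a0 + Rabs b0 ->
  Rabs (Rabs a / (Rabs a + Rabs b) - Rabs a0 / (Rabs a0 + Rabs b0))
    <= (Rabs (a - a0) + Rabs (b - b0)) / (Rabs a + Rabs b).
Proof.
  intros Hp Hp0.
  pose proof (Rabs_triang_inv2 a a0) as Ha. pose proof (Rabs_triang_inv2 b b0) as Hb.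
  pose proof (Rabs_pos a0) as Ha0. pose proof (Rabs_pos b0) as Hb0.
  set (u := Rabs a) in *. set (v := Rabs b) in *. set (u0 := Rabs a0) in *. set (v0 := Rabs b0) in *.
  set (w := u0 / (u0 + v0)).
  assert (Hw : 0 <= w <= 1).
  { unfold w. split; [apply Rmult_le_pos; [lra | left; apply Rinv_0_lt_compat; lra]|].
    apply (Rmult_le_reg_r (u0 + v0)); [lra|]. field_simplify; lra. }
  (* u0 = w (u0 + v0) and v0 = (1 - w) (u0 + v0), so the difference is a convex combination *)
  replace (u / (u + v) - w)
    with (((1 - w) * (u - u0) - w * (v - v0)) * / (u + v)) by (unfold w; field; lra).
  unfold Rdiv. rewrite Rabs_mult, (Rabs_inv (u + v)), (Rabs_pos_eq (u + v)) by lra.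
  apply Rmult_le_compat_r; [left; apply Rinv_0_lt_compat; lra|].
  unfold Rminus at 1. eapply Rle_trans; [apply Rabs_triang|].
  rewrite Rabs_Ropp, !Rabs_mult, (Rabs_pos_eq (1 - w)), (Rabs_pos_eq w) by lra.
  pose proof (Rabs_pos (u - u0)). pose proof (Rabs_pos (v - v0)). nra.
Qed.

Lemma R_open_ball (c d : R) : R_open (fun t => Rabs (t - c) < d).
Proof.
  intros y Hy. exists (d - Rabs (y - c)). split; [lra|]. intros z Hz.
  assert (Rabs (z - c) <= Rabs (z - y) + Rabs (y - c)).
  { replace (z - c) with ((z - y) + (y - c)) by ring. apply Rabs_triang. }
  lra.
Qed.

Section Continuity.

Context {X : Type} (T : (X -> Prop) -> Prop) (HT : is_topology T).

Lemma open_of_locally_open (P : X -> Prop) :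
  (forall x, P x -> exists U, T U /\ U x /\ forall y, U y -> P y) -> T P.
Proof.
  intro Hloc. destruct HT as [_ [_ Hunion]].
  replace P with (fun x => exists U, (T U /\ forall y, U y -> P y) /\ U x).
  - apply Hunion. intros U [HU _]. exact HU.
  - apply set_ext. intro x. split.
    + intros [U [[_ HUP] HUx]]. exact (HUP x HUx).
    + intro Hx. destruct (Hloc x Hx) as [U [HU [HUx HUP]]]. exists U. auto.
Qed.

Lemma continuous_const (c : R) : continuous T (fun _ => c).
Proof.
  intros V _. apply open_of_locally_open. intros x Hc.
  exists (fun _ => True). split; [apply HT | auto].
Qed.

Lemma continuous_comp2 (f g : X -> R) (Phi : R -> R -> R) :
  continuous T f -> continuous T g ->
  (forall x eps, 0 < eps -> exists delta, 0 < delta /\ forall a b,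
     Rabs (a - f x) < delta -> Rabs (b - g x) < delta ->
     Rabs (Phi a b - Phi (f x) (g x)) < eps) ->
  continuous T (fun x => Phi (f x) (g x)).
Proof.
  intros Hf Hg HPhi V HV. apply open_of_locally_open. intros x Hx.
  destruct (HV _ Hx) as [eps [Heps Hball]].
  destruct (HPhi x eps Heps) as [d [Hd Hd']].
  exists (fun y => Rabs (f y - f x) < d /\ Rabs (g y - g x) < d). split; [|split].
  - apply HT; [apply (Hf _ (R_open_ball (f x) d)) | apply (Hg _ (R_open_ball (g x) d))].
  - rewrite !Rminus_diag, Rabs_R0. lra.
  - intros y [Hfy Hgy]. apply Hball, Hd'; assumption.
Qed.

Lemma continuous_lipschitz2 (f g : X -> R) (Phi : R -> R -> R) :
  continuous T f -> continuous T g ->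
  (forall a b a0 b0, Rabs (Phi a b - Phi a0 b0) <= Rabs (a - a0) + Rabs (b - b0)) ->
  continuous T (fun x => Phi (f x) (g x)).
Proof.
  intros Hf Hg HL. apply continuous_comp2; [exact Hf | exact Hg|].
  intros x eps He. exists (eps / 2). split; [lra|]. intros a b Ha Hb.
  specialize (HL a b (f x) (g x)). lra.
Qed.

Lemma cozero_set_open (V : X -> Prop) : cozero_set T V -> T V.
Proof.
  intros [g [Hg HgV]].
  replace V with (fun x => (fun t => t <> 0) (g x)).
  - apply (Hg (fun t => t <> 0)). intros y Hy. exists (Rabs y). split; [apply Rabs_pos_lt; exact Hy|].
    intros z Hz ->. rewrite Rminus_0_l, Rabs_Ropp in Hz. lra.
  - apply set_ext. intro x. rewrite HgV. tauto.
Qed.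

Lemma cozero_set_dist_lt (f g : X -> R) (r : R) :
  continuous T f -> continuous T g -> cozero_set T (fun x => Rabs (g x - f x) < r).
Proof.
  intros Hf Hg. exists (fun x => Rmax 0 (r - Rabs (g x - f x))). split.
  - apply (continuous_lipschitz2 g f (fun a b => Rmax 0 (r - Rabs (a - b)))); [exact Hg | exact Hf|].
    intros a b a0 b0. eapply Rle_trans; [apply Rmax0_lipschitz|].
    replace (r - Rabs (a - b) - (r - Rabs (a0 - b0))) with (- (Rabs (a - b) - Rabs (a0 - b0))) by ring.
    rewrite Rabs_Ropp. apply Rabs_dist_lipschitz.
  - intro x. rewrite Rmax0_neq0. lra.
Qed.

Lemma zero_set_dist_le (f g : X -> R) (r : R) :
  continuous T f -> continuous T g -> zero_set T (fun x => Rabs (g x - f x) <= r).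
Proof.
  intros Hf Hg. exists (fun x => Rmax 0 (Rabs (g x - f x) - r)). split.
  - apply (continuous_lipschitz2 g f (fun a b => Rmax 0 (Rabs (a - b) - r))); [exact Hg | exact Hf|].
    intros a b a0 b0. eapply Rle_trans; [apply Rmax0_lipschitz|].
    replace (Rabs (a - b) - r - (Rabs (a0 - b0) - r)) with (Rabs (a - b) - Rabs (a0 - b0)) by ring.
    apply Rabs_dist_lipschitz.
  - intro x. rewrite Rmax0_eq0. lra.
Qed.

Lemma zero_cozero_separation (W V : X -> Prop) :
  zero_set T W -> cozero_set T V -> (forall x, W x -> V x) ->
  exists h, continuous T h /\ (forall x, W x -> h x = 0) /\ (forall x, ~ V x -> h x = 1).
Proof.
  intros [z [Hz HzW]] [g [Hg HgV]] HWV.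
  assert (Hpos : forall x, 0 < Rabs (z x) + Rabs (g x)).
  { intro x. pose proof (Rabs_pos (z x)). pose proof (Rabs_pos (g x)).
    destruct (Req_dec (g x) 0) as [Hg0|Hg0].
    - assert (Hz0 : z x <> 0) by (intro Hz0; exact (proj1 (HgV x) (HWV x (proj2 (HzW x) Hz0)) Hg0)).
      pose proof (Rabs_pos_lt _ Hz0). lra.
    - pose proof (Rabs_pos_lt _ Hg0). lra. }
  exists (fun x => Rabs (z x) / (Rabs (z x) + Rabs (g x))). split; [|split].
  - apply (continuous_comp2 z g (fun a b => Rabs a / (Rabs a + Rabs b))); [exact Hz | exact Hg|].
    intros x eps He. pose proof (Hpos x) as Hp. set (p := Rabs (z x) + Rabs (g x)) in *.
    assert (Hep : 0 < eps * p) by (apply Rmult_lt_0_compat; lra).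
    exists (Rmin (p / 4) (eps * p / 4)). split; [apply Rmin_pos; lra|].
    intros a b Ha Hb. set (d := Rmin (p / 4) (eps * p / 4)) in *.
    assert (Hd : d <= p / 4 /\ d <= eps * p / 4) by (split; [apply Rmin_l | apply Rmin_r]).
    pose proof (Rle_lt_trans _ _ _ (Rabs_triang_inv2 a (z x)) Ha) as Ha'.
    pose proof (Rle_lt_trans _ _ _ (Rabs_triang_inv2 b (g x)) Hb) as Hb'.
    apply Rabs_def2 in Ha'. apply Rabs_def2 in Hb'.
    assert (Hq : p / 2 <= Rabs a + Rabs b) by (unfold p in *; lra).
    eapply Rle_lt_trans; [apply Rabs_ratio_lipschitz; fold p; lra|].
    apply (Rmult_lt_reg_r (Rabs a + Rabs b)); [lra|].
    unfold Rdiv. rewrite Rmult_assoc, Rinv_l, Rmult_1_r by lra. nra.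
  - intros x Hx. apply HzW in Hx. rewrite Hx, Rabs_R0. unfold Rdiv. ring.
  - intros x Hx. assert (Hg0 : g x = 0) by (apply NNPP; intro Hg0; apply Hx, HgV, Hg0).
    specialize (Hpos x). rewrite Hg0, Rabs_R0, Rplus_0_r in *. apply Rdiv_diag. lra.
Qed.

End Continuity.

Section Cp.

Context {X : Type} (T : (X -> Prop) -> Prop).

Definition Cp_ball (g0 : CX T) (K : list X) (r : R) (h : CX T) : Prop :=
  forall y, In y K -> Rabs (proj1_sig h y - proj1_sig g0 y) < r.

Lemma Cp_ball_open (g0 : CX T) (K : list X) (r : R) : Cp_open T (Cp_ball g0 K r).
Proof.
  intros g Hg.
  destruct (list_uniform_gap K (fun y => Rabs (proj1_sig g y - proj1_sig g0 y)) r Hg)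
    as [e [He He']].
  exists K, e. split; [exact He|]. intros h Hh y Hy.
  specialize (Hh y Hy). specialize (He' y Hy). simpl in He'.
  assert (Rabs (proj1_sig h y - proj1_sig g0 y)
          <= Rabs (proj1_sig h y - proj1_sig g y) + Rabs (proj1_sig g y - proj1_sig g0 y)).
  { replace (proj1_sig h y - proj1_sig g0 y)
      with ((proj1_sig h y - proj1_sig g y) + (proj1_sig g y - proj1_sig g0 y)) by ring.
    apply Rabs_triang. }
  lra.
Qed.

Lemma Cp_ball_nbhd (g0 : CX T) (K : list X) (r : R) :
  0 < r -> nbhd (Cp_open T) g0 (Cp_ball g0 K r).
Proof.
  intro Hr. exists (Cp_ball g0 K r). split; [apply Cp_ball_open|]. split; [|auto].
  intros y _. rewrite Rminus_diag, Rabs_R0. exact Hr.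
Qed.

Lemma Gamma_at_pointwise (f : CX T) (A : CX T -> Prop) :
  Gamma_at (Cp_open T) f A -> forall x r, 0 < r ->
  exists L, forall g, A g -> r <= Rabs (proj1_sig g x - proj1_sig f x) -> In g L.
Proof.
  intros [_ [_ Hconv]] x r Hr.
  destruct (Hconv _ (Cp_ball_nbhd f (x :: nil) r Hr)) as [L HL].
  exists L. intros g Hg Hgx. apply HL; [exact Hg|].
  intro Hball. specialize (Hball x (or_introl eq_refl)). lra.
Qed.

Lemma Gamma_at_subset (f : CX T) (A B : CX T -> Prop) :
  Gamma_at (Cp_open T) f A -> (forall g, B g -> A g) -> infinite B ->
  Gamma_at (Cp_open T) f B.
Proof.
  intros [_ [HfA Hconv]] HBA HB. split; [exact HB|]. split; [intro HfB; exact (HfA (HBA f HfB))|].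
  intros N HN. destruct (Hconv N HN) as [L HL]. exists L. intros g Hg. apply HL, HBA, Hg.
Qed.

Lemma Omega_at_of_approx (f : CX T) (b : nat -> CX T) :
  (forall n, b n <> f) -> (forall K eps, 0 < eps -> exists n, Cp_ball f K eps (b n)) ->
  Omega_at (Cp_open T) f (fun e => exists n, e = b n).
Proof.
  intros Hbf Happrox. split.
  - intros N [U [HU [HUf HUN]]]. destruct (HU f HUf) as [K [eps [He Hball]]].
    destruct (Happrox K eps He) as [n Hn]. exists (b n). split; [exists n; reflexivity|].
    apply HUN, Hball, Hn.
  - intros [n Hn]. exact (Hbf n (eq_sym Hn)).
Qed.

Lemma gamma_cover_of_Gamma_at (f : CX T) (A : CX T -> Prop) (S : CX T -> X -> Prop)
    (Fam : (X -> Prop) -> Prop) (r : R) :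
  0 < r -> Gamma_at (Cp_open T) f A ->
  (forall g x, Rabs (proj1_sig g x - proj1_sig f x) < r -> S g x) ->
  (forall g, A g -> exists x, ~ S g x) ->
  (forall V, Fam V <-> exists g, A g /\ V = S g) ->
  gamma_cover Fam.
Proof.
  intros Hr HA HballS HnotX HFam.
  pose proof (Gamma_at_pointwise f A HA) as Hpt.
  (* only finitely many g in A are r-far from f at x *)
  assert (Hin : forall x (B : CX T -> Prop), infinite B -> (forall g, B g -> A g) ->
                exists g, B g /\ S g x).
  { intros x B HB HBA. destruct (Hpt x r Hr) as [L HL].
    destruct (infinite_avoid B L HB) as [g [Hg HgL]]. exists g. split; [exact Hg|].
    apply HballS. apply Rnot_le_lt. intro Hle. exact (HgL (HL g (HBA g Hg) Hle)). }
  split; [split|split].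
  - intro x. destruct (Hin x A (proj1 HA) (fun g Hg => Hg)) as [g [Hg Hx]].
    exists (S g). split; [apply HFam; exists g; auto | exact Hx].
  - intros [V [HV Hfull]]. apply HFam in HV. destruct HV as [g [Hg ->]].
    destruct (HnotX g Hg) as [x Hx]. exact (Hx (Hfull x)).
  - intros [L HL].
    destruct (infinite_fiber A S L (proj1 HA)) as [V [_ Hfib]].
    { intros g Hg. apply HL, HFam. exists g; auto. }
    destruct (infinite_avoid _ nil Hfib) as [g0 [[Hg0 HV] _]].
    destruct (HnotX g0 Hg0) as [x Hx]. apply Hx. rewrite HV.
    destruct (Hin x _ Hfib (fun g Hg => proj1 Hg)) as [g [[_ <-] Hgx]]. exact Hgx.
  - intro x. destruct (Hpt x r Hr) as [L HL]. exists (map S L).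
    intros V HV HVx. apply HFam in HV. destruct HV as [g [Hg ->]].
    apply in_map, HL; [exact Hg|]. apply Rnot_lt_le. intro Hlt. exact (HVx (HballS g x Hlt)).
Qed.

Lemma Gamma_at_of_gamma_cover (g0 : CX T) (Fam : (X -> Prop) -> Prop)
    (h : (X -> Prop) -> CX T) :
  gamma_cover Fam ->
  (forall W, Fam W -> forall x, W x -> proj1_sig (h W) x = proj1_sig g0 x) ->
  (forall W, Fam W -> exists x, proj1_sig (h W) x <> proj1_sig g0 x) ->
  Gamma_at (Cp_open T) g0 (fun a => exists W, Fam W /\ a = h W).
Proof.
  intros [_ [Hinf Hpt]] Hagree Hdiff. split; [|split].
  - intros [L HL].
    destruct (infinite_fiber Fam h L Hinf) as [a [_ Hfib]].
    { intros W HW. apply HL. exists W; auto. }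
    destruct (infinite_avoid _ nil Hfib) as [W0 [[HW0 <-] _]].
    destruct (Hdiff W0 HW0) as [x Hx]. apply Hx.
    destruct (Hpt x) as [Lx HLx].
    destruct (infinite_avoid _ Lx Hfib) as [W [[HW HhW] HWL]].
    rewrite <- HhW. apply Hagree; [exact HW|].
    apply NNPP; intro HWx. exact (HWL (HLx W HW HWx)).
  - intros [W [HW Hg0]]. destruct (Hdiff W HW) as [x Hx]. rewrite <- Hg0 in Hx. exact (Hx eq_refl).
  - intros N [U [HU [Hg0U HUN]]]. destruct (HU g0 Hg0U) as [K [eps [He Hball]]].
    destruct (list_of_finite_union K (fun y W => Fam W /\ ~ W y)) as [M HM].
    { intros y _. destruct (Hpt y) as [Ly HLy]. exists Ly. intros W [HW HWy]. exact (HLy W HW HWy). }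
    exists (map h M). intros a [W [HW ->]] HNa. apply in_map.
    destruct (classic (exists y, In y K /\ ~ W y)) as [[y [Hy HWy]] | HKW].
    + exact (HM W y Hy (conj HW HWy)).
    + exfalso. apply HNa, HUN, Hball. intros y Hy.
      rewrite (Hagree W HW y); [rewrite Rminus_diag, Rabs_R0; exact He|].
      apply NNPP; intro HWy. exact (HKW (ex_intro _ y (conj Hy HWy))).
Qed.

Lemma Omega_at_of_radius_approx (f : CX T) (b : nat -> CX T) :
  (forall n, b n <> f) ->
  (forall K M, exists n, (M <= n)%nat /\ Cp_ball f K (radius n) (b n)) ->
  Omega_at (Cp_open T) f (fun e => exists n, e = b n).
Proof.
  intros Hbf Happrox. apply Omega_at_of_approx; [exact Hbf|].
  intros K eps He. destruct (radius_lt eps He) as [M HM].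
  destruct (Happrox K M) as [n [HMn Hn]]. exists n. intros y Hy.
  pose proof (Hn y Hy). pose proof (radius_le M n HMn). lra.
Qed.

End Cp.

Lemma GammaF_of_Gamma_at {X : Type} (T : (X -> Prop) -> Prop) (HT : is_topology T)
    (f : CX T) (A : CX T -> Prop) (r : R) :
  0 < r -> Gamma_at (Cp_open T) f A ->
  (forall g, A g -> exists x, r <= Rabs (proj1_sig g x - proj1_sig f x)) ->
  GammaF T (fun V => exists g, A g /\ V = fun x => Rabs (proj1_sig g x - proj1_sig f x) < r).
Proof.
  intros Hr HA Hfar.
  set (S := fun (s : R) (g : CX T) x => Rabs (proj1_sig g x - proj1_sig f x) < s).
  set (Fam := fun V => exists g, A g /\ V = S r g).
  assert (Hgamma : gamma_cover Fam).
  { apply (gamma_cover_of_Gamma_at T f A (S r) Fam r Hr HA); [auto | | reflexivity].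
    intros g Hg. destruct (Hfar g Hg) as [x Hx]. exists x. unfold S. lra. }
  destruct (choice (fun V g => Fam V -> A g /\ V = S r g)) as [gsel Hgsel].
  { intro V. destruct (classic (Fam V)) as [[g Hg] | HV]; [exists g; auto | exists f; tauto]. }
  set (Z := fun (g : CX T) x => Rabs (proj1_sig g x - proj1_sig f x) <= r / 2).
  split; [exact Hgamma|]. split.
  - intros V [g [_ ->]]. apply cozero_set_dist_lt; [exact HT | apply proj2_sig | apply proj2_sig].
  - exists (fun V => Z (gsel V)). split.
    + intros V HV. destruct (Hgsel V HV) as [_ HVg]. split.
      * apply zero_set_dist_le; [exact HT | apply proj2_sig | apply proj2_sig].
      * intros x Hx. rewrite HVg. unfold S, Z in *. lra.
    + set (A' := fun g => exists V, Fam V /\ g = gsel V).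
      assert (HA' : Gamma_at (Cp_open T) f A').
      { apply (Gamma_at_subset T f A); [exact HA | intros g [V [HV ->]]; apply Hgsel, HV|].
        intros [L HL]. apply (proj1 (proj2 Hgamma)). exists (map (S r) L).
        intros V HV. destruct (Hgsel V HV) as [_ ->]. apply in_map, HL. exists V; auto. }
      apply (gamma_cover_of_Gamma_at T f A' Z _ (r / 2)); [lra | exact HA' | | |].
      * intros g x Hx. unfold Z. lra.
      * intros g [V [HV ->]]. destruct (Hfar (gsel V) (proj1 (Hgsel V HV))) as [x Hx].
        exists x. unfold Z. lra.
      * intro W. split.
        -- intros [V [HV ->]]. exists (gsel V). split; [exists V; auto | reflexivity].
        -- intros [g [[V [HV ->]] ->]]. exists V; auto.
Qed.

Section Implications.

Context {X : Type} (T : (X -> Prop) -> Prop) (HT : is_topology T).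

Section Selection_in_Cp.

Variables (f : CX T) (An : nat -> CX T -> Prop).
Hypothesis HAn : forall n, Gamma_at (Cp_open T) f (An n).

Lemma Gamma_at_seq_nonempty n : exists g, An n g.
Proof. destruct (infinite_avoid _ nil (proj1 (HAn n))) as [g [Hg _]]. exists g; exact Hg. Qed.

Lemma Gamma_at_seq_neq b : (forall n, An n (b n)) -> forall n, b n <> f.
Proof. intros Hb n Hbn. apply (proj1 (proj2 (HAn n))). rewrite <- Hbn. apply Hb. Qed.

Lemma Omega_selection_of_often_close :
  (forall M, exists n, (M <= n)%nat /\ exists g, An n g /\
     forall x, Rabs (proj1_sig g x - proj1_sig f x) < radius n) ->
  exists b, (forall n, An n (b n)) /\ Omega_at (Cp_open T) f (fun e => exists n, e = b n).
Proof.
  intro Hoften.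
  set (close := fun n (g : CX T) => forall x, Rabs (proj1_sig g x - proj1_sig f x) < radius n).
  destruct (choice (fun n g => An n g /\
              ((exists g', An n g' /\ close n g') -> close n g))) as [b Hb].
  { intro n. destruct (classic (exists g, An n g /\ close n g)) as [[g Hg] | Hno].
    - exists g. split; [apply Hg | intros _; apply Hg].
    - destruct (Gamma_at_seq_nonempty n) as [g Hg]. exists g. split; [exact Hg | contradiction]. }
  exists b. split; [intro n; apply Hb|].
  apply Omega_at_of_radius_approx; [apply Gamma_at_seq_neq; intro n; apply Hb|].
  intros K M. destruct (Hoften M) as [n [HMn Hclose]].
  exists n. split; [exact HMn|]. intros y _. exact (proj2 (Hb n) Hclose y).
Qed.

Lemma Omega_selection_of_eventually_far (N0 : nat) :
  S1 (GammaF T) (omega_cover T) ->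
  (forall n g, (N0 <= n)%nat -> An n g ->
     exists x, radius n <= Rabs (proj1_sig g x - proj1_sig f x)) ->
  exists b, (forall n, An n (b n)) /\ Omega_at (Cp_open T) f (fun e => exists n, e = b n).
Proof.
  intros HGF Hfar.
  set (near := fun n (g : CX T) x => Rabs (proj1_sig g x - proj1_sig f x) < radius n).
  destruct (HGF (fun m V => exists g, An (m + N0)%nat g /\ V = near (m + N0)%nat g))
    as [Vsel [HVsel Homega]].
  { intro m. apply GammaF_of_Gamma_at; [exact HT | apply radius_pos | apply HAn |].
    intros g Hg. apply Hfar; [lia | exact Hg]. }
  destruct (choice (fun n g => An n g /\ ((N0 <= n)%nat -> Vsel (n - N0)%nat = near n g)))
    as [b Hb].
  { intro n. destruct (Compare_dec.le_lt_dec N0 n) as [Hn|Hn].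
    - destruct (HVsel (n - N0)%nat) as [g [Hg HV]].
      replace (n - N0 + N0)%nat with n in * by lia. exists g. auto.
    - destruct (Gamma_at_seq_nonempty n) as [g Hg]. exists g. split; [exact Hg | intro; lia]. }
  exists b. split; [intro n; apply Hb|].
  apply Omega_at_of_radius_approx; [apply Gamma_at_seq_neq; intro n; apply Hb|].
  intros K M.
  destruct (omega_cover_avoid T _ Homega K (map Vsel (seq 0 M))) as [V [[m ->] [HVL HVK]]].
  assert (HMm : (M <= m)%nat) by (apply Nat.nlt_ge; intro Hm; apply HVL, in_map, in_seq; lia).
  exists (m + N0)%nat. split; [lia|]. intros y Hy.
  destruct (Hb (m + N0)%nat) as [_ HV]. specialize (HV ltac:(lia)).
  replace (m + N0 - N0)%nat with m in HV by lia.
  rewrite HV in HVK. exact (HVK y Hy).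
Qed.

End Selection_in_Cp.

Lemma S1_Gamma_Omega_of_S1_GammaF :
  S1 (GammaF T) (omega_cover T) ->
  forall f : CX T, S1 (Gamma_at (Cp_open T) f) (Omega_at (Cp_open T) f).
Proof.
  intros HGF f An HAn.
  destruct (classic (forall M, exists n, (M <= n)%nat /\ exists g, An n g /\
                       forall x, Rabs (proj1_sig g x - proj1_sig f x) < radius n))
    as [Hoften | Hrarely].
  - exact (Omega_selection_of_often_close f An HAn Hoften).
  - destruct (not_all_ex_not _ _ Hrarely) as [N0 HN0].
    apply (Omega_selection_of_eventually_far f An HAn N0 HGF).
    intros n g HN0n Hg. apply NNPP; intro Hno. apply HN0. exists n.
    split; [exact HN0n|]. exists g. split; [exact Hg|]. intro x.
    apply Rnot_le_lt. intro Hx. apply Hno. exists x; exact Hx.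
Qed.

Lemma S1_GammaF_of_S1_Gamma_Omega :
  (forall f : CX T, S1 (Gamma_at (Cp_open T) f) (Omega_at (Cp_open T) f)) ->
  S1 (GammaF T) (omega_cover T).
Proof.
  intros HGO Un HUn.
  set (zero := exist (continuous T) (fun _ : X => 0) (continuous_const T HT 0) : CX T).
  destruct (choice (fun n F =>
      (forall V, Un n V -> zero_set T (F V) /\ forall x, F V x -> V x) /\
      gamma_cover (fun W => exists V, Un n V /\ W = F V))) as [F HF].
  { intro n. apply (HUn n). }
  set (Fam := fun n W => exists V, Un n V /\ W = F n V).
  (* indexed by W rather than V: only the F n V form a γ-cover, and F n need not be injective *)
  set (separates := fun n (W : X -> Prop) (p : (X -> Prop) * CX T) =>
         Un n (fst p) /\ (forall x, W x -> proj1_sig (snd p) x = 0) /\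
         (forall x, ~ fst p x -> proj1_sig (snd p) x = 1)).
  assert (Hsep : forall n W, exists p, Fam n W -> separates n W p).
  { intros n W. destruct (classic (Fam n W)) as [[V [HV ->]] | HW]; [|exists (W, zero); tauto].
    destruct (proj1 (HF n) V HV) as [HZ HFV].
    destruct (zero_cozero_separation T HT (F n V) V HZ (proj1 (proj2 (HUn n)) V HV) HFV)
      as [h [Hh [Hh0 Hh1]]].
    exists (V, exist _ h Hh). intros _. split; [exact HV | auto]. }
  destruct (choice (fun n sel => forall W, Fam n W -> separates n W (sel W))) as [sel Hsel].
  { intro n. exact (choice _ (Hsep n)). }
  set (An := fun n a => exists W, Fam n W /\ a = snd (sel n W)).
  assert (HAn : forall n, Gamma_at (Cp_open T) zero (An n)).
  { intro n. apply Gamma_at_of_gamma_cover; [apply (HF n) | apply Hsel |].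
    intros W HW. destruct (Hsel n W HW) as [HV [_ Hh1]].
    destruct (cover_member_not_full _ _ (proj1 (proj1 (HUn n))) HV) as [x Hx].
    exists x. rewrite (Hh1 x Hx). simpl. lra. }
  destruct (HGO zero An HAn) as [b [Hb [Hcl _]]].
  destruct (choice (fun n W => Fam n W /\ b n = snd (sel n W))) as [Wsel HWsel].
  { intro n. destruct (Hb n) as [W HW]. exists W. exact HW. }
  exists (fun n => fst (sel n (Wsel n))).
  assert (HUsel : forall n, Un n (fst (sel n (Wsel n)))) by (intro n; apply Hsel, HWsel).
  split; [exact HUsel|]. apply (omega_cover_of_selection T Un).
  { intro n. split; [apply (HUn n)|]. split; [apply HUsel|].
    apply cozero_set_open, (proj1 (proj2 (HUn n))), HUsel. }
  intro K. destruct (Hcl _ (Cp_ball_nbhd T zero K 1 Rlt_0_1)) as [a [[m ->] Hbm]].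
  exists m. intros x Hx. apply NNPP; intro Hnx. destruct (HWsel m) as [HWm Hbm_eq].
  specialize (Hbm x Hx). rewrite Hbm_eq, (proj2 (proj2 (Hsel m _ HWm)) x Hnx) in Hbm.
  simpl in Hbm. rewrite Rminus_0_r, Rabs_R1 in Hbm. lra.
Qed.

End Implications.

Theorem mainTheorem5 (X : Type) (T : (X -> Prop) -> Prop)
  (HT : is_topology T) (HX : tychonoff T) :
  (forall f : CX T, S1 (Gamma_at (Cp_open T) f) (Omega_at (Cp_open T) f)) <->
  S1 (GammaF T) (omega_cover T).
Proof.
  split; [apply S1_GammaF_of_S1_Gamma_Omega | apply S1_Gamma_Omega_of_S1_GammaF]; exact HT.
Qed.
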